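(* Let $\lambda,\mu\in P^+$ (type $C_2$). Then $$|\mathcal S^{C}_{\lambda,\mu}|=|\mathcal S^{C}_{\lambda-\varpi_1,\mu-\varpi_1}|+|{}^{1}\mathcal S^{C}_{\lambda-\varpi_2,\mu-\varpi_2}|+|{}^{2}\mathcal S^{C}_{\lambda,\mu}|.$$ Moreover, if $\min\{m_2,n_2\}>0$ then $$|{}^{2}\mathcal S^{C}_{\lambda,\mu}|=|{}^{2}\mathcal S^{C}_{\lambda-\varpi_2,\mu-\varpi_2}|+\min\{2(m_1+m_2),2(n_1+n_2),m_1+n_1\}+1,$$ and if $\min\{m_2,n_2\}=0$ and $\min\{m_1,n_1\}>0$ then $$|{}^{2}\mathcal S^{C}_{\lambda,\mu}|=|{}^{2}\mathcal S^{C}_{\lambda-\varpi_1,\mu-\varpi_1}|+\min\{n_1,m_2\}+\min\{m_1,n_2\}+1.$$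
   Context: For integral weights $\lambda,\mu$ of type $C_2$ (fundamental weights $\varpi_1,\varpi_2$, $\alpha_1$ short) write $m_i=\lambda(h_i)$, $n_i=\mu(h_i)$ (arbitrary integers; sets are defined by the same inequalities for all integer values). $\mathcal S^{C}_{\lambda,\mu}=\{(a,b,c,d)\in\mathbb Z_+^4: a\le\min\{m_1,n_1\},\ d\le\min\{m_2,n_2\},\ a+b+c\le\min\{m_1+m_2,n_1+n_2\},\ a+b+d\le\min\{m_1+m_2,n_1+n_2\},\ 2a+b\le m_1+n_1,\ 2d+b\le m_2+n_2,\ 2a+b+2(c-d)\le m_1+n_1\}$. ${}^{1}\mathcal S^{C}_{\lambda,\mu}=\{(b,c,d)\in\mathbb Z_+^3: d\le\min\{m_2,n_2\},\ b+d\le\min\{m_1+m_2,n_1+n_2\},\ b+c\le\min\{m_1+m_2,n_1+n_2\},\ b\le m_1+n_1,\ 2d+b\le m_2+n_2,\ b+2c-2d\le m_1+n_1\}$. ${}^{2}\mathcal S^{C}_{\lambda,\mu}\subseteq\mathbb Z_+^3$ is the union of $\{(b,0,d): d\le\min\{m_2,n_2\},\ b+d\le\min\{m_1+m_2,n_1+n_2\},\ b\le m_1+n_1,\ 2d+b\le m_2+n_2\}$ and $\{(b,c,0): c\ge1,\ b+c\le\min\{m_1+m_2,n_1+n_2\},\ b\le m_2+n_2,\ b+2c\le m_1+n_1\}$. *)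

(* Weights are given by integer coordinates m_i = lambda(h_i),
   n_i = mu(h_i); the sets live in Z_+^k, encoded with nat coordinates. *)
From mathcomp Require Import all_boot all_order all_algebra.
Set Implicit Arguments. Unset Strict Implicit. Unset Printing Implicit Defensive.
Import Order.TTheory GRing.Theory Num.Theory.
Local Open Scope ring_scope.

Definition inSC (m1 m2 n1 n2 : int) (a b c d : nat) : bool :=
  [&& (a%:Z <= Order.min m1 n1),
      (d%:Z <= Order.min m2 n2),
      (a%:Z + b%:Z + c%:Z <= Order.min (m1 + m2) (n1 + n2)),
      (a%:Z + b%:Z + d%:Z <= Order.min (m1 + m2) (n1 + n2)),
      (2 * a%:Z + b%:Z <= m1 + n1),
      (2 * d%:Z + b%:Z <= m2 + n2) &
      (2 * a%:Z + b%:Z + 2 * (c%:Z - d%:Z) <= m1 + n1)].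

Definition inS1C (m1 m2 n1 n2 : int) (b c d : nat) : bool :=
  [&& (d%:Z <= Order.min m2 n2),
      (b%:Z + d%:Z <= Order.min (m1 + m2) (n1 + n2)),
      (b%:Z + c%:Z <= Order.min (m1 + m2) (n1 + n2)),
      (b%:Z <= m1 + n1),
      (2 * d%:Z + b%:Z <= m2 + n2) &
      (b%:Z + 2 * c%:Z - 2 * d%:Z <= m1 + n1)].

Definition inS2C (m1 m2 n1 n2 : int) (b c d : nat) : bool :=
  ([&& c == 0%N,
      (d%:Z <= Order.min m2 n2),
      (b%:Z + d%:Z <= Order.min (m1 + m2) (n1 + n2)),
      (b%:Z <= m1 + n1) &
      (2 * d%:Z + b%:Z <= m2 + n2)])
  ||
  ([&& d == 0%N, (0 < c)%N,
      (b%:Z + c%:Z <= Order.min (m1 + m2) (n1 + n2)),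
      (b%:Z <= m2 + n2) &
      (b%:Z + 2 * c%:Z <= m1 + n1)]).

(* A box bound: every coordinate of every element of each of the three sets
   is at most |m1|+|m2|+|n1|+|n2|, so counting inside [0, bnd) counts the
   whole (finite) set. *)
Definition bnd (m1 m2 n1 n2 : int) : nat :=
  (`|m1| + `|m2| + `|n1| + `|n2|).+1%N.

Definition cardSC (m1 m2 n1 n2 : int) : nat :=
  let N := bnd m1 m2 n1 n2 in
  #|[set x : 'I_N * 'I_N * 'I_N * 'I_N |
      inSC m1 m2 n1 n2 x.1.1.1 x.1.1.2 x.1.2 x.2]|.

Definition cardS1C (m1 m2 n1 n2 : int) : nat :=
  let N := bnd m1 m2 n1 n2 in
  #|[set x : 'I_N * 'I_N * 'I_N | inS1C m1 m2 n1 n2 x.1.1 x.1.2 x.2]|.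

Definition cardS2C (m1 m2 n1 n2 : int) : nat :=
  let N := bnd m1 m2 n1 n2 in
  #|[set x : 'I_N * 'I_N * 'I_N | inS2C m1 m2 n1 n2 x.1.1 x.1.2 x.2]|.

From mathcomp Require Import all_boot all_order all_algebra zify.
Import Order.TTheory GRing.Theory Num.Theory.

(* We first turn every
   cardinality into an iterated sum, over one common box [0, L)^k, of the 0/1
   indicator of the defining inequalities (the sets lie in every box large
   enough to contain them).  Each identity is then a pointwise decomposition
   of an indicator, checked by linear integer arithmetic, followed by the
   reindexing of one or two summation variables:
   - peeling the coordinate a of S^C_{lambda,mu}: the part a >= 1 is
     S^C_{lambda-w1,mu-w1}; the part a = 0 is ^2S^C_{lambda,mu} together with
     ^1S^C_{lambda-w2,mu-w2} shifted by (c,d) -> (c+1,d+1);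
   - for ^2S^C both recursions compare the d = 0 part T of ^2S^C_{lambda,mu}
     with its translates inside the smaller set; the difference is a row or
     two of T, counted in closed form (count_leq, count_pairs).
   The file develops general facts on sums of nat-valued functions over
   initial segments [0, N), then box sums, then the three recursions for
   fixed dominant weights, and finally lemma5p3. *)

Lemma big_nat_trunc {K N} {F : nat -> nat} :
  K <= N -> (forall i, K <= i -> F i = 0) ->
  \sum_(0 <= i < N) F i = \sum_(0 <= i < K) F i.
Proof.
move=> leKN F0; rewrite (@big_cat_nat _ _ _ K) //= [X in _ + X]big_nat_cond.
by rewrite [X in _ + X]big1 ?addn0 // => i /andP[/andP[leKi _] _]; apply: F0.
Qed.

Lemma big_nat_shift N (F : nat -> nat) : F N = 0 ->
  \sum_(0 <= i < N) F i = F 0 + \sum_(0 <= i < N) F i.+1.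
Proof.
case: N => [|N] FN; first by rewrite !big_geq // FN.
by rewrite big_nat_recl // [in RHS]big_nat_recr //= FN addn0.
Qed.

Lemma big_nat_only0 N (F : nat -> nat) : 0 < N -> (forall i, 0 < i -> F i = 0) ->
  \sum_(0 <= i < N) F i = F 0.
Proof.
case: N => // N _ F0; rewrite big_nat_recl // big1 ?addn0 // => i _; exact: F0.
Qed.

Lemma count_leq N y : \sum_(0 <= b < N) (b <= y : nat) = minn N y.+1.
Proof.
elim: N => [|N IH]; first by rewrite big_nil; lia.
by rewrite big_nat_recr //= IH; case: leqP; lia.
Qed.

Lemma count_pairs N x :
  \sum_(0 <= c < N) ((2 * c <= x : nat) + (2 * c + 1 <= x : nat)) = minn (2 * N) x.+1.
Proof.
elim: N => [|N IH]; first by rewrite big_nil; lia.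
by rewrite big_nat_recr //= IH; case: (leqP (2 * N) x); case: (leqP (2 * N + 1) x); lia.
Qed.

Lemma big_nat_shift_pos N (P : nat -> bool) : P N.-1 = false ->
  \sum_(0 <= i < N) ((0 < i) && P i.-1 : nat) = \sum_(0 <= i < N) (P i : nat).
Proof.
case: N => [|N] PN; first by rewrite !big_geq.
by rewrite big_nat_shift //= PN.
Qed.

Lemma big_nat2_shift_pos N (P : nat -> nat -> bool) :
  (forall i, P N.-1 i = false /\ P i N.-1 = false) ->
  \sum_(0 <= i < N) \sum_(0 <= j < N) ((0 < i) && (0 < j) && P i.-1 j.-1 : nat) =
  \sum_(0 <= i < N) \sum_(0 <= j < N) (P i j : nat).
Proof.
case: N => [|N] PN; first by rewrite !big_geq.
rewrite big_nat_shift /=; last by apply: big1 => j _; rewrite (proj1 (PN _)) andbF.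
rewrite big1 ?add0n //; apply: eq_bigr => i _.
exact: big_nat_shift_pos (proj2 (PN i)).
Qed.

Definition sum3 N (F : nat -> nat -> nat -> nat) : nat :=
  \sum_(0 <= a < N) \sum_(0 <= b < N) \sum_(0 <= c < N) F a b c.

Definition sum4 N (F : nat -> nat -> nat -> nat -> nat) : nat :=
  \sum_(0 <= a < N) \sum_(0 <= b < N) \sum_(0 <= c < N) \sum_(0 <= d < N) F a b c d.

Lemma card3_sum N (P : nat -> nat -> nat -> bool) :
  #|[set x : 'I_N * 'I_N * 'I_N | P x.1.1 x.1.2 x.2]| = sum3 N P.
Proof.
rewrite /sum3 big_mkord.
under eq_bigr => a _ do rewrite big_mkord.
under eq_bigr => a _ do under eq_bigr => b _ do rewrite big_mkord.
rewrite pair_bigA /= pair_bigA /= -sum1_card [LHS]big_mkcond /=.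
by apply: eq_bigr => x _; rewrite in_set; case: (P _ _ _).
Qed.

Lemma card4_sum N (P : nat -> nat -> nat -> nat -> bool) :
  #|[set x : 'I_N * 'I_N * 'I_N * 'I_N | P x.1.1.1 x.1.1.2 x.1.2 x.2]| = sum4 N P.
Proof.
rewrite /sum4 big_mkord.
under eq_bigr => a _ do rewrite big_mkord.
under eq_bigr => a _ do under eq_bigr => b _ do rewrite big_mkord.
under eq_bigr => a _ do under eq_bigr => b _ do under eq_bigr => c _ do rewrite big_mkord.
rewrite pair_bigA /= pair_bigA /= pair_bigA /= -sum1_card [LHS]big_mkcond /=.
by apply: eq_bigr => x _; rewrite in_set; case: (P _ _ _ _).
Qed.

Lemma sum3_trunc {K N} (P : nat -> nat -> nat -> bool) : K <= N ->
  (forall a b c, P a b c -> [&& a < K, b < K & c < K]) -> sum3 N P = sum3 K P.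
Proof.
move=> leKN suppP.
have P0 a b c : K <= a \/ K <= b \/ K <= c -> P a b c = false.
  by case E: (P a b c) => //; move/suppP: E; lia.
rewrite /sum3 (big_nat_trunc leKN) => [|a Ka]; last first.
  by do 2 (apply: big1 => ? _); rewrite P0 //; left.
apply: eq_bigr => a _; rewrite (big_nat_trunc leKN) => [|b Kb]; last first.
  by apply: big1 => ? _; rewrite P0 //; right; left.
by apply: eq_bigr => b _; apply: big_nat_trunc => // c Kc; rewrite P0 //; right; right.
Qed.

Lemma sum4_trunc {K N} (P : nat -> nat -> nat -> nat -> bool) : K <= N ->
  (forall a b c d, P a b c d -> [&& a < K, b < K, c < K & d < K]) ->
  sum4 N P = sum4 K P.
Proof.
move=> leKN suppP.
have P0 a b c d : K <= a \/ K <= b \/ K <= c \/ K <= d -> P a b c d = false.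
  by case E: (P a b c d) => //; move/suppP: E; lia.
rewrite /sum4 (big_nat_trunc leKN) => [|a Ka]; last first.
  by do 3 (apply: big1 => ? _); rewrite P0 //; left.
apply: eq_bigr => a _; rewrite (big_nat_trunc leKN) => [|b Kb]; last first.
  by do 2 (apply: big1 => ? _); rewrite P0 //; right; left.
apply: eq_bigr => b _; rewrite (big_nat_trunc leKN) => [|c Kc]; last first.
  by apply: big1 => ? _; rewrite P0 //; do 2 right; left.
by apply: eq_bigr => c _; apply: big_nat_trunc => // d Kd; rewrite P0 //; do 3 right.
Qed.

Lemma cardSC_sum (m1 m2 n1 n2 : int) N : bnd m1 m2 n1 n2 <= N ->
  cardSC m1 m2 n1 n2 = sum4 N (inSC m1 m2 n1 n2).
Proof.
move=> leN; rewrite /cardSC card4_sum (sum4_trunc _ leN) // => a b c d.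
by rewrite /inSC /bnd; lia.
Qed.

Lemma cardS1C_sum (m1 m2 n1 n2 : int) N : bnd m1 m2 n1 n2 <= N ->
  cardS1C m1 m2 n1 n2 = sum3 N (inS1C m1 m2 n1 n2).
Proof.
move=> leN; rewrite /cardS1C card3_sum (sum3_trunc _ leN) // => b c d.
by rewrite /inS1C /bnd; lia.
Qed.

Lemma cardS2C_sum (m1 m2 n1 n2 : int) N : bnd m1 m2 n1 n2 <= N ->
  cardS2C m1 m2 n1 n2 = sum3 N (inS2C m1 m2 n1 n2).
Proof.
move=> leN; rewrite /cardS2C card3_sum (sum3_trunc _ leN) // => b c d.
by rewrite /inS2C /bnd; lia.
Qed.

Lemma sum3_d0 {N} {F : nat -> nat -> nat -> bool} {G : nat -> nat -> bool} : 0 < N ->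
  (forall b c d, F b c d = (d == 0) && G b c) ->
  sum3 N F = \sum_(0 <= b < N) \sum_(0 <= c < N) (G b c : nat).
Proof.
move=> N_gt0 FE; apply: eq_bigr => b _; apply: eq_bigr => c _.
by under eq_bigr => d _ do rewrite FE; rewrite big_nat_only0 // => -[].
Qed.

Lemma inSC_shift_a (m1 m2 n1 n2 : int) a b c d :
  inSC m1 m2 n1 n2 a.+1 b c d = inSC (m1 - 1)%R m2 (n1 - 1)%R n2 a b c d.
Proof. by rewrite /inSC; lia. Qed.

Section Recursions.

Variables m1 m2 n1 n2 : nat.

(* A box containing all the sets at the weights (lambda, mu),
   (lambda - w1, mu - w1) and (lambda - w2, mu - w2). *)
Let box := (m1 + m2 + n1 + n2).+3.

Lemma inSC_a0 b c d :
  (inSC m1 m2 n1 n2 0 b c d : nat) =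
  ((0 < c) && (0 < d) && inS1C m1 (m2%:Z - 1)%R n1 (n2%:Z - 1)%R b c.-1 d.-1 : nat)
  + inS2C m1 m2 n1 n2 b c d.
Proof. by rewrite /inSC /inS1C /inS2C; case: c => [|c]; case: d => [|d] /=; lia. Qed.

Lemma cardSC_rec :
  cardSC m1 m2 n1 n2 =
    cardSC (m1%:Z - 1)%R m2 (n1%:Z - 1)%R n2
    + cardS1C m1 (m2%:Z - 1)%R n1 (n2%:Z - 1)%R + cardS2C m1 m2 n1 n2.
Proof.
rewrite !(@cardSC_sum _ _ _ _ box, @cardS1C_sum _ _ _ _ box, @cardS2C_sum _ _ _ _ box);
  try by rewrite /bnd; lia.
rewrite /sum4 /sum3 [LHS]big_nat_shift; last first.
  by do 3 (apply: big1 => ? _); rewrite /inSC; lia.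
under [X in _ + X]eq_bigr => a _ do under eq_bigr => b _ do
  under eq_bigr => c _ do under eq_bigr => d _ do rewrite inSC_shift_a.
rewrite addnC -addnA; congr (_ + _).
under eq_bigr => b _ do under eq_bigr => c _ do under eq_bigr => d _ do rewrite inSC_a0.
under eq_bigr => b _ do under eq_bigr => c _ do rewrite big_split.
under eq_bigr => b _ do rewrite big_split.
rewrite big_split /=; congr (_ + _); apply: eq_bigr => b _.
by apply: big_nat2_shift_pos => i; rewrite /inS1C; split; lia.
Qed.

(* The d = 0 part of ^2S^C_{lambda,mu}, as a set of pairs (b,c): for
   dominant weights it is cut out by these three inequalities. *)
Definition inT b c : bool :=
  [&& b <= m2 + n2, b + c <= minn (m1 + m2) (n1 + n2) & b + 2 * c <= m1 + n1].

Lemma inS2C_d0 b c d : minn m2 n2 = 0 ->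
  inS2C m1 m2 n1 n2 b c d = (d == 0) && inT b c.
Proof. by rewrite /inS2C /inT; lia. Qed.

Lemma inS2C_w1_d0 b c d : minn m2 n2 = 0 -> 0 < minn m1 n1 ->
  inS2C (m1%:Z - 1)%R m2 (n1%:Z - 1)%R n2 b c d = (d == 0) && inT b c.+1.
Proof. by rewrite /inS2C /inT; lia. Qed.

(* Third recursion: the difference counts the pairs (b,0) in T. *)
Lemma cardS2C_rec_w1 : minn m2 n2 = 0 -> 0 < minn m1 n1 ->
  cardS2C m1 m2 n1 n2 =
    cardS2C (m1%:Z - 1)%R m2 (n1%:Z - 1)%R n2 + minn n1 m2 + minn m1 n2 + 1.
Proof.
move=> m2n2_0 m1n1_gt0.
rewrite !(@cardS2C_sum _ _ _ _ box); try by rewrite /bnd; lia.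
rewrite (sum3_d0 _ (fun b c d => inS2C_d0 b c d m2n2_0)) //.
rewrite (sum3_d0 _ (fun b c d => inS2C_w1_d0 b c d m2n2_0 m1n1_gt0)) //.
have T0 b : inT b 0 = (b <= minn (m2 + n2) (minn (minn (m1 + m2) (n1 + n2)) (m1 + n1))).
  by rewrite /inT; lia.
have peel_c0 b : \sum_(0 <= c < box) (inT b c : nat) =
    (inT b 0 : nat) + \sum_(0 <= c < box) (inT b c.+1 : nat).
  by rewrite big_nat_shift //; rewrite /inT; lia.
under eq_bigr => b _ do rewrite peel_c0 T0.
by rewrite big_split /= count_leq; lia.
Qed.

(* When m2, n2 > 0, write lambda' = lambda - w2, mu' = mu - w2 and
   Q b d = [(b,0,d) in ^2S^C_{lambda',mu'}].  Then ^2S^C_{lambda,mu} splits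
   into its c = 0, d > 0 part, which is Q shifted by d -> d + 1, and its
   d = 0 part T; ^2S^C_{lambda',mu'} splits into Q and its c > 0, d = 0 part,
   which is T shifted by (b,c) -> (b-2,c+1). *)
Lemma inS2C_split_w2 b c d : 0 < m2 -> 0 < n2 ->
  (inS2C m1 m2 n1 n2 b c d : nat) =
  ((c == 0) && (0 < d) && inS2C m1 (m2%:Z - 1)%R n1 (n2%:Z - 1)%R b 0 d.-1 : nat)
  + ((d == 0) && inT b c : nat).
Proof. by rewrite /inS2C /inT; case: d => [|d] /=; lia. Qed.

Lemma inS2C_w2_split b c d : 0 < m2 -> 0 < n2 ->
  (inS2C m1 (m2%:Z - 1)%R n1 (n2%:Z - 1)%R b c d : nat) =
  ((c == 0) && inS2C m1 (m2%:Z - 1)%R n1 (n2%:Z - 1)%R b 0 d : nat)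
  + ((d == 0) && (0 < c) && inT b.+2 c.-1 : nat).
Proof. by rewrite /inS2C /inT; case: c => [|c]; case: d => [|d] /=; lia. Qed.

(* The rows b = 0 and b = 1 of T together contain one point for each
   integer 0 <= k <= min(2(m1+m2), 2(n1+n2), m1+n1), namely (k mod 2, k/2). *)
Lemma inT_rows01 c : 0 < m2 -> 0 < n2 ->
  (inT 0 c : nat) + (inT 1 c : nat) =
  (2 * c <= minn (2 * minn (m1 + m2) (n1 + n2)) (m1 + n1) : nat)
  + (2 * c + 1 <= minn (2 * minn (m1 + m2) (n1 + n2)) (m1 + n1) : nat).
Proof. by rewrite /inT; lia. Qed.

(* Second recursion: the difference counts the rows b = 0, 1 of T. *)
Lemma cardS2C_rec_w2 : 0 < minn m2 n2 ->
  cardS2C m1 m2 n1 n2 =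
    cardS2C m1 (m2%:Z - 1)%R n1 (n2%:Z - 1)%R
    + minn (minn (2 * (m1 + m2)) (2 * (n1 + n2))) (m1 + n1) + 1.
Proof.
move=> m2n2_gt0; have m2_gt0 : 0 < m2 by lia.
have n2_gt0 : 0 < n2 by lia.
rewrite !(@cardS2C_sum _ _ _ _ box); try by rewrite /bnd; lia.
pose Q b d := inS2C m1 (m2%:Z - 1)%R n1 (n2%:Z - 1)%R b 0 d.
pose G b := \sum_(0 <= c < box) (inT b c : nat).
have Q_top b : Q b box.-1 = false by rewrite /Q /inS2C; lia.
have slice b : \sum_(0 <= c < box) \sum_(0 <= d < box) (inS2C m1 m2 n1 n2 b c d : nat)
    = \sum_(0 <= d < box) (Q b d : nat) + G b.
  under eq_bigr => c _ do under eq_bigr => d _ do rewrite inS2C_split_w2 //.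
  under eq_bigr => c _ do rewrite big_split.
  rewrite big_split /=; congr (_ + _); last first.
    by apply: eq_bigr => c _; rewrite big_nat_only0 // => -[].
  rewrite big_nat_only0 //=; last by move=> [|c] // _; apply: big1.
  exact: big_nat_shift_pos (Q_top b).
have slice_w2 b :
    \sum_(0 <= c < box) \sum_(0 <= d < box)
      (inS2C m1 (m2%:Z - 1)%R n1 (n2%:Z - 1)%R b c d : nat)
    = \sum_(0 <= d < box) (Q b d : nat) + G b.+2.
  under eq_bigr => c _ do under eq_bigr => d _ do rewrite inS2C_w2_split //.
  under eq_bigr => c _ do rewrite big_split.
  rewrite big_split /=; congr (_ + _).
    by rewrite big_nat_only0 // => -[|c] // _; apply: big1.
  rewrite (eq_bigr (fun c => ((0 < c) && inT b.+2 c.-1 : nat))); last first.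
    by move=> c _; rewrite big_nat_only0 // => -[].
  by apply: big_nat_shift_pos; rewrite /inT; lia.
have peel_b01 : \sum_(0 <= b < box) G b = G 0 + G 1 + \sum_(0 <= b < box) G b.+2.
  by rewrite big_nat_shift ?[X in _ + X]big_nat_shift ?addnA //;
    apply: big1 => c _; rewrite /inT; lia.
have rows01 : G 0 + G 1 = (minn (2 * minn (m1 + m2) (n1 + n2)) (m1 + n1)).+1.
  rewrite /G -big_split /=.
  by under eq_bigr => c _ do rewrite inT_rows01 //; rewrite count_pairs; lia.
rewrite /sum3 (eq_bigr _ (fun b _ => slice b)) (eq_bigr _ (fun b _ => slice_w2 b)).
by rewrite !big_split /= peel_b01 rows01; lia.
Qed.

End Recursions.

Local Open Scope ring_scope.

Theorem lemma5p3 (m1 m2 n1 n2 : nat) :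
  cardSC m1 m2 n1 n2 =
    (cardSC (m1%:Z - 1) m2 (n1%:Z - 1) n2
     + cardS1C m1 (m2%:Z - 1) n1 (n2%:Z - 1)
     + cardS2C m1 m2 n1 n2)%N
  /\ ((0 < minn m2 n2)%N ->
      cardS2C m1 m2 n1 n2 =
        (cardS2C m1 (m2%:Z - 1) n1 (n2%:Z - 1)
         + minn (minn (2 * (m1 + m2)) (2 * (n1 + n2))) (m1 + n1) + 1)%N)
  /\ (minn m2 n2 = 0%N -> (0 < minn m1 n1)%N ->
      cardS2C m1 m2 n1 n2 =
        (cardS2C (m1%:Z - 1) m2 (n1%:Z - 1) n2
         + minn n1 m2 + minn m1 n2 + 1)%N).
Proof.
split; first exact: cardSC_rec.
split; first exact: cardS2C_rec_w2.
exact: cardS2C_rec_w1.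
Qed.
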